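(* Assume (A1), (A2), (A3). For all $x,\tilde x,v,\tilde v\in\mathbb R^d$, \[r(x,\tilde x,v,\tilde v)^2\le2\,\frac{(1+\alpha)^2+\alpha^2}{\min(\frac13\lambda,3)}\big(H(x,v)+H(\tilde x,\tilde v)\big),\] so that in particular, if $r(x,\tilde x,v,\tilde v)\ge R_1$ then $\gamma H(x,v)+\gamma H(\tilde x,\tilde v)\ge\frac{12}5B$.
   Context: $U,W\in\mathcal C^1(\mathbb R^d)$. (A1): $U\ge0$ and there exist $\lambda>0$, $A\ge0$ with $\tfrac12\nabla U(x)\cdot x\ge\lambda(U(x)+|x|^2/4)-A$ for all $x$. (A2): $\nabla U$ is $L_U$-Lipschitz, $L_U>0$. (A3): $W$ even, $\nabla W$ is $L_W$-Lipschitz, $L_W<\lambda/8$. Fix $\tilde A\ge0$ with $U(x)\ge\frac\lambda6|x|^2-\tilde A$ for all $x$. Set $\gamma=\frac{\lambda}{2(\lambda+1)}$, $B=24(A+(\lambda-\gamma)\tilde A+d)$, $H(x,v)=24U(x)+(6(1-\gamma)+\lambda)|x|^2+12x\cdot v+12|v|^2$, $\alpha=L_U+\frac\lambda4$, $R_1=\sqrt{\frac{24((1+\alpha)^2+\alpha^2)}{5\gamma\min(3,\lambda/3)}B}$, and $r(x,\tilde x,v,\tilde v)=\alpha|x-\tilde x|+|x-\tilde x+v-\tilde v|$. *)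

From HB Require Import structures.
From mathcomp Require Import all_boot all_order all_algebra.
From mathcomp Require Import all_classical all_reals all_analysis.
Set Implicit Arguments. Unset Strict Implicit. Unset Printing Implicit Defensive.
Import Order.TTheory GRing.Theory Num.Theory.
Import numFieldNormedType.Exports.
Local Open Scope ring_scope.

Section Defs.
Variables (R : realType) (d : nat).

Definition dotp (x y : 'rV[R]_d) : R := \sum_(i < d) x ord0 i * y ord0 i.
Definition enorm (x : 'rV[R]_d) : R := Num.sqrt (dotp x x).

Definition is_gradient (f : 'rV[R]_d -> R) (g : 'rV[R]_d -> 'rV[R]_d) : Prop :=
  forall x, differentiable f x /\ forall h, 'd f x h = dotp (g x) h.

Definition C1_with_gradient (f : 'rV[R]_d -> R) (g : 'rV[R]_d -> 'rV[R]_d) : Prop :=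
  is_gradient f g /\ continuous g.

Definition lipschitz_with (L : R) (g : 'rV[R]_d -> 'rV[R]_d) : Prop :=
  forall x y, enorm (g x - g y) <= L * enorm (x - y).

Definition gamma_c (lam : R) : R := lam / (2 * (lam + 1)).
Definition B_c (lam A At : R) : R :=
  24 * (A + (lam - gamma_c lam) * At + d%:R).
Definition H_fn (lam : R) (U : 'rV[R]_d -> R) (x v : 'rV[R]_d) : R :=
  24 * U x + (6 * (1 - gamma_c lam) + lam) * dotp x x + 12 * dotp x v
  + 12 * dotp v v.
Definition alpha_c (lam LU : R) : R := LU + lam / 4.
Definition R1_c (lam LU A At : R) : R :=
  Num.sqrt (24 * ((1 + alpha_c lam LU) ^+ 2 + alpha_c lam LU ^+ 2)
            / (5 * gamma_c lam * Num.min 3 (lam / 3)) * B_c lam A At).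
Definition r_fn (lam LU : R) (x xt v vt : 'rV[R]_d) : R :=
  alpha_c lam LU * enorm (x - xt) + enorm (x - xt + v - vt).

End Defs.

From HB Require Import structures.
From mathcomp Require Import all_boot all_order all_algebra.
From mathcomp Require Import all_classical all_reals all_analysis.
From mathcomp Require Import ring lra.
Set Implicit Arguments. Unset Strict Implicit. Unset Printing Implicit Defensive.
Import Order.TTheory GRing.Theory Num.Theory.
Import numFieldNormedType.Exports.
Local Open Scope ring_scope.

(* Writing m = min(lam/3, 3) and y = x + v, the quadratic part of H(x, v) is
   a positive definite form in (x, y) that dominates m (|x|^2 + |y|^2); as U
   is nonnegative, H(x, v) >= m (|x|^2 + |x + v|^2).  Since r is at most
   alpha |x - x~| + |y - y~|, Cauchy-Schwarz and |p - q|^2 <= 2(|p|^2 + |q|^2)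
   bound r^2 by 2 ((1 + alpha)^2 + alpha^2) times the sum of these four
   squares, which gives the first claim.  The second one is the first at
   r >= R1, where R1^2 was chosen to make the constants match. *)

Lemma sqr_form_lower (R : realFieldType) (m k a b : R) :
  0 <= m <= 3 -> 3 + 3 * m <= k ->
  m * (a ^+ 2 + (a + b) ^+ 2) <= k * a ^+ 2 + 12 * (a * b) + 12 * b ^+ 2.
Proof.
move=> /andP[m_ge0 m_le3] k_ge.
set y := a + b.
have -> : b = y - a by rewrite /y addrAC subrr add0r.
have det_ge : 36 <= (k - m) * (12 - m) by nra.
have : 0 <= ((12 - m) * y - 6 * a) ^+ 2 + ((k - m) * (12 - m) - 36) * a ^+ 2.
  by rewrite addr_ge0 ?sqr_ge0 // mulr_ge0 ?sqr_ge0 ?subr_ge0.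
have -> : ((12 - m) * y - 6 * a) ^+ 2 + ((k - m) * (12 - m) - 36) * a ^+ 2
        = (12 - m) * ((k * a ^+ 2 + 12 * (a * (y - a)) + 12 * (y - a) ^+ 2)
                      - m * (a ^+ 2 + y ^+ 2)) by ring.
by rewrite pmulr_rge0 ?subr_ge0 //; lra.
Qed.

Lemma sqrtr_le_trans (R : rcfType) (X Y r : R) :
  Num.sqrt X <= r -> r ^+ 2 <= Y -> X <= Y.
Proof.
move=> sX_le_r r2_le_Y; rewrite -ler_sqrt; last exact: le_trans (sqr_ge0 r) r2_le_Y.
apply: (le_trans sX_le_r); apply: (le_trans (ler_norm r)).
by rewrite -sqrtr_sqr ler_wsqrtr.
Qed.

Section Euclidean.
Variables (R : realType) (d : nat).
Implicit Types x y v : 'rV[R]_d.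

Lemma dotp_ge0 x : 0 <= dotp x x.
Proof. by apply: sumr_ge0 => i _; rewrite -expr2 sqr_ge0. Qed.

Lemma enorm_sqr x : enorm x ^+ 2 = dotp x x.
Proof. by rewrite sqr_sqrtr // dotp_ge0. Qed.

Lemma dotp_sub_le x y : dotp (x - y) (x - y) <= 2 * (dotp x x + dotp y y).
Proof.
rewrite /dotp -big_split mulr_sumr /=; apply: ler_sum => i _; rewrite !mxE.
by have := sqr_ge0 (x ord0 i + y ord0 i); rewrite expr2; nra.
Qed.

Lemma dotp_form_lower (m k : R) x v :
  0 <= m <= 3 -> 3 + 3 * m <= k ->
  m * (dotp x x + dotp (x + v) (x + v))
    <= k * dotp x x + 12 * dotp x v + 12 * dotp v v.
Proof.
move=> m_range k_ge; rewrite /dotp mulrDr !mulr_sumr -!big_split /=.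
apply: ler_sum => i _; rewrite !mxE -mulrDr -!expr2.
exact: sqr_form_lower.
Qed.

End Euclidean.

Section LyapunovBounds.
Variables (R : realType) (d : nat) (lam : R).
Implicit Types x xt v vt : 'rV[R]_d.

Lemma gamma_c_gt0 : 0 < lam -> 0 < gamma_c lam.
Proof. by move=> lam_gt0; apply: divr_gt0; lra. Qed.

Lemma gamma_c_le_half : 0 < lam -> gamma_c lam <= 1 / 2.
Proof. by move=> lam_gt0; rewrite ler_pdivrMr; lra. Qed.

Lemma min_third_gt0 : 0 < lam -> 0 < Num.min (lam / 3) 3.
Proof. by move=> lam_gt0; rewrite lt_min; apply/andP; split; lra. Qed.

Lemma H_fn_lower (U : 'rV[R]_d -> R) x v : 0 < lam -> 0 <= U x ->
  Num.min (lam / 3) 3 * (dotp x x + dotp (x + v) (x + v)) <= H_fn lam U x v.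
Proof.
move=> lam_gt0 Ux_ge0; have gamma_le := gamma_c_le_half lam_gt0.
have m_range : 0 <= Num.min (lam / 3) 3 <= 3.
  by rewrite ge_min lexx orbT le_min; apply/andP; split; lra.
have m_le : Num.min (lam / 3) 3 <= lam / 3 by rewrite ge_min lexx.
have := dotp_form_lower (k := 6 * (1 - gamma_c lam) + lam) x v m_range.
rewrite /H_fn; lra.
Qed.

Lemma r_fn_sqr_le (LU : R) x xt v vt : 0 < lam -> 0 <= LU ->
  r_fn lam LU x xt v vt ^+ 2
    <= 2 * ((1 + alpha_c lam LU) ^+ 2 + alpha_c lam LU ^+ 2)
       * (dotp x x + dotp (x + v) (x + v) + (dotp xt xt + dotp (xt + vt) (xt + vt))).
Proof.
move=> lam_gt0 LU_ge0; set al := alpha_c lam LU.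
have al_ge0 : 0 <= al by rewrite /al /alpha_c; lra.
rewrite /r_fn -/al.
have -> : x - xt + v - vt = (x + v) - (xt + vt).
  by rewrite opprD !addrA (addrAC x v).
set a := enorm (x - xt); set b := enorm (x + v - (xt + vt)).
have a2_le : a ^+ 2 <= 2 * (dotp x x + dotp xt xt) by rewrite enorm_sqr dotp_sub_le.
have b2_le : b ^+ 2 <= 2 * (dotp (x + v) (x + v) + dotp (xt + vt) (xt + vt)).
  by rewrite enorm_sqr dotp_sub_le.
have cauchy_schwarz : (al * a + b) ^+ 2 <= (1 + al ^+ 2) * (a ^+ 2 + b ^+ 2).
  by have := sqr_ge0 (a - al * b); lra.
apply: (le_trans cauchy_schwarz); rewrite [2 * _]mulrC -mulrA.
apply: ler_pM; rewrite ?addr_ge0 ?sqr_ge0 //; first by rewrite lerD2r; nra.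
by rewrite mulrDr; lra.
Qed.

Lemma r_fn_sqr_le_H_fn (U : 'rV[R]_d -> R) (LU : R) x xt v vt :
  0 < lam -> 0 <= LU -> (forall y, 0 <= U y) ->
  r_fn lam LU x xt v vt ^+ 2
    <= 2 * (((1 + alpha_c lam LU) ^+ 2 + alpha_c lam LU ^+ 2) / Num.min (lam / 3) 3)
       * (H_fn lam U x v + H_fn lam U xt vt).
Proof.
move=> lam_gt0 LU_ge0 U_ge0; apply: (le_trans (r_fn_sqr_le x xt v vt lam_gt0 LU_ge0)).
set m := Num.min _ _; set K := _ + _ ^+ 2; set P := _ + _ + _.
have m_gt0 : 0 < m := min_third_gt0 lam_gt0.
have K_ge0 : 0 <= K by rewrite addr_ge0 ?sqr_ge0.
have -> : 2 * K * P = 2 * (K / m) * (m * P) by field; rewrite gt_eqF.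
apply: ler_wpM2l; first by apply: mulr_ge0 => //; apply: divr_ge0 => //; exact: ltW.
by rewrite /P mulrDr; apply: lerD; apply: H_fn_lower.
Qed.

End LyapunovBounds.

Theorem lemma2p3 (R : realType) (d : nat)
  (U W : 'rV[R]_d -> R) (gradU gradW : 'rV[R]_d -> 'rV[R]_d)
  (lam A LU LW At : R)
  (hU : C1_with_gradient U gradU) (hW : C1_with_gradient W gradW)
  (* (A1) *)
  (hUnn : forall x, 0 <= U x) (hlam : 0 < lam) (hA : 0 <= A)
  (hA1 : forall x, dotp (gradU x) x / 2 >= lam * (U x + dotp x x / 4) - A)
  (* (A2) *)
  (hLU : 0 < LU) (hUlip : lipschitz_with LU gradU)
  (* (A3) *)
  (hWeven : forall x, W (- x) = W x)
  (hLW0 : 0 <= LW) (hWlip : lipschitz_with LW gradW) (hLW : LW < lam / 8)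
  (* the fixed constant A~ *)
  (hAt : 0 <= At) (hUAt : forall x, U x >= lam / 6 * dotp x x - At) :
  forall x xt v vt : 'rV[R]_d,
    r_fn lam LU x xt v vt ^+ 2
      <= 2 * (((1 + alpha_c lam LU) ^+ 2 + alpha_c lam LU ^+ 2)
              / Num.min (lam / 3) 3)
         * (H_fn lam U x v + H_fn lam U xt vt)
    /\ (r_fn lam LU x xt v vt >= R1_c d lam LU A At ->
        gamma_c lam * H_fn lam U x v + gamma_c lam * H_fn lam U xt vt
          >= 12 / 5 * B_c d lam A At).
Proof.
move=> x xt v vt.
have r2_le := r_fn_sqr_le_H_fn x xt v vt hlam (ltW hLU) hUnn.
set m := Num.min (lam / 3) 3 in r2_le *.
set K := (1 + alpha_c lam LU) ^+ 2 + alpha_c lam LU ^+ 2 in r2_le *.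
set S := H_fn lam U x v + H_fn lam U xt vt in r2_le *.
have m_gt0 : 0 < m := min_third_gt0 hlam.
have K_gt0 : 0 < K by rewrite ltr_pwDl ?sqr_ge0 // exprn_gt0 // /alpha_c; lra.
split => // r_ge_R1.
have := sqrtr_le_trans r_ge_R1 r2_le.
have g_gt0 := gamma_c_gt0 hlam.
rewrite minC -/m -/K (_ : 24 * K / (5 * gamma_c lam * m) * B_c d lam A At
   = 2 * (K / m) * (12 / (5 * gamma_c lam) * B_c d lam A At)); last first.
  by field; rewrite (gt_eqF g_gt0) (gt_eqF m_gt0).
rewrite ler_pM2l ?mulr_gt0 ?invr_gt0 // => /(ler_wpM2l (ltW g_gt0)).
rewrite mulrA (_ : gamma_c lam * (12 / (5 * gamma_c lam)) = 12 / 5).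
  by rewrite /S mulrDr.
by field; rewrite gt_eqF.
Qed.
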